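(* Let $k\ge 1$, let $(A,t)$ be a $\mathcal{C}_k$-algebra and let $U\subseteq A$ be an ultrafilter of $A$. Then $$N=\bigcap_{i=0}^{k-1}\big(t^i(U)\cap \varphi(t^i(U))\big)$$ is a $c$-filter of $A$.
   Context: A De Morgan algebra is a bounded distributive lattice $\langle A,\wedge,\vee,0,1\rangle$ with a unary operation $\sim$ satisfying $\sim\sim x=x$ and $\sim(x\vee y)=\sim x\wedge\sim y$. A modal pseudocomplemented De Morgan algebra ($mpM$-algebra) is an algebra $\langle A,\wedge,\vee,\sim,{}^\ast,0,1\rangle$ such that $\langle A,\wedge,\vee,\sim,0,1\rangle$ is a De Morgan algebra, $x^\ast$ is the pseudocomplement of $x$ (i.e. $x\wedge y=0$ iff $y\le x^\ast$), and $x\vee\sim x\le x\vee x^\ast$ for all $x$. Put $\nabla x=\sim(\sim x\wedge x^\ast)$ and $\triangle x=\sim\nabla\sim x$. For an integer $k\ge1$, a $\mathcal{C}_k$-algebra is a pair $(A,t)$ where $A$ is an $mpM$-algebra and $t:A\to A$ is an automorphism of $mpM$-algebras with $t^k(x)=x$ for all $x$ (where $t^0=\mathrm{id}$, $t^n=t^{n-1}\circ t$). A $c$-filter of $A$ is a lattice filter $F$ of $A$ such that $x\in F$ implies $\triangle x\in F$ and $t(x)\in F$. An ultrafilter is a maximal proper lattice filter. For a prime filter $P$ of $A$, the Birula–Rasiowa transform is $\varphi(P)=A\setminus\{\sim x: x\in P\}$ (again a prime filter). *)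

(* the lattice part of an mpM-algebra is a bounded
   distributive lattice (tbDistrLatticeType); ~ and * are extra operations. *)
From mathcomp Require Import all_boot all_order.
Set Implicit Arguments. Unset Strict Implicit. Unset Printing Implicit Defensive.
Import Order.TTheory.
Local Open Scope order_scope.

Section MPM.
Context {disp : Order.disp_t} {A : tbDistrLatticeType disp}.

Definition demorgan_op (neg : A -> A) : Prop :=
  (forall x, neg (neg x) = x) /\
  (forall x y, neg (x `|` y) = neg x `&` neg y).

Definition pseudocomplement (pc : A -> A) : Prop :=
  forall x y, x `&` y = \bot <-> y <= pc x.

Definition mpM_algebra (neg pc : A -> A) : Prop :=
  [/\ demorgan_op neg, pseudocomplement pc &
      forall x, x `|` neg x <= x `|` pc x].

Definition nabla (neg pc : A -> A) (x : A) : A := neg (neg x `&` pc x).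
Definition delta (neg pc : A -> A) (x : A) : A := neg (nabla neg pc (neg x)).

Definition mpM_automorphism (neg pc t : A -> A) : Prop :=
  bijective t /\
  (forall x y, t (x `&` y) = t x `&` t y) /\
  (forall x y, t (x `|` y) = t x `|` t y) /\
  t \bot = \bot /\ t \top = \top /\
  (forall x, t (neg x) = neg (t x)) /\
  (forall x, t (pc x) = pc (t x)).

Definition Ck_algebra (k : nat) (neg pc t : A -> A) : Prop :=
  [/\ mpM_algebra neg pc, mpM_automorphism neg pc t &
      forall x, iter k t x = x].

Definition lattice_filter (F : A -> Prop) : Prop :=
  [/\ exists x, F x,
      (forall x y, F x -> x <= y -> F y) &
      (forall x y, F x -> F y -> F (x `&` y))].

Definition proper_filter (F : A -> Prop) : Prop :=
  lattice_filter F /\ exists x, ~ F x.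

Definition ultrafilter (U : A -> Prop) : Prop :=
  proper_filter U /\
  forall G : A -> Prop, proper_filter G -> (forall x, U x -> G x) ->
    forall x, G x -> U x.

Definition c_filter (neg pc t : A -> A) (F : A -> Prop) : Prop :=
  [/\ lattice_filter F,
      (forall x, F x -> F (delta neg pc x)) &
      (forall x, F x -> F (t x))].

Definition image_set (f : A -> A) (S : A -> Prop) : A -> Prop :=
  fun y => exists2 x, S x & y = f x.

Definition br_transform (neg : A -> A) (P : A -> Prop) : A -> Prop :=
  fun y => ~ (exists2 x, P x & y = neg x).

Definition N_set (k : nat) (neg t : A -> A) (U : A -> Prop) : A -> Prop :=
  fun y => forall i, (i < k)%N ->
    image_set (iter i t) U y /\ br_transform neg (image_set (iter i t) U) y.

End MPM.

From mathcomp Require Import all_boot all_order.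
From Stdlib Require Import Classical.
Set Implicit Arguments. Unset Strict Implicit. Unset Printing Implicit Defensive.
Import Order.TTheory.
Local Open Scope order_scope.

(* 1. Lattice facts: every ultrafilter of a bounded distributive lattice is
      prime; the image of a prime filter under a lattice automorphism is prime;
      finite intersections of filters are filters.
   2. De Morgan facts: the Birula-Rasiowa transform phi(P) of a prime filter P
      is a filter, so each t^i(U) \cap phi(t^i(U)) is a filter and so is N.
   3. mpM facts: Delta x = x /\ (~x)^*, and the axiom x \/ ~x <= x \/ x^*
      forces P \cap phi(P) to be closed under Delta for every prime filter P.
   4. Since t^k = id, each t^i is t composed with some t^j (j < k); as t
      commutes with ~ and is injective, t maps N into N. *)

Section LatticeFilters.
Context {disp : Order.disp_t} {A : tbDistrLatticeType disp}.
Implicit Types (F G P U : A -> Prop) (x y : A).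

Definition prime_filter P : Prop :=
  [/\ lattice_filter P, ~ P \bot & forall x y, P (x `|` y) -> P x \/ P y].

Definition lattice_automorphism (f : A -> A) : Prop :=
  [/\ bijective f, {morph f : x y / x `&` y}, {morph f : x y / x `|` y}
    & f \bot = \bot].

Lemma filter_top F : lattice_filter F -> F \top.
Proof. by move=> [[x Fx] Fup _]; apply: Fup Fx (lex1 _). Qed.

Lemma filterI F G :
  lattice_filter F -> lattice_filter G -> lattice_filter (fun y => F y /\ G y).
Proof.
move=> Ff Gf; case: (Ff) => _ Fup Fmeet; case: (Gf) => _ Gup Gmeet; split.
- by exists \top; split; apply: filter_top.
- by move=> x y [Fx Gx] lexy; split; [apply: Fup Fx lexy | apply: Gup Gx lexy].
- by move=> x y [Fx Gx] [Fy Gy]; split; [apply: Fmeet | apply: Gmeet].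
Qed.

Lemma filter_bigcap (k : nat) (F : nat -> A -> Prop) :
  (forall i, (i < k)%N -> lattice_filter (F i)) ->
  lattice_filter (fun y => forall i, (i < k)%N -> F i y).
Proof.
move=> Ff; split.
- by exists \top; move=> i ik; apply: filter_top (Ff i ik).
- by move=> x y Fx lexy i ik; case: (Ff i ik) => _ Fup _; apply: Fup (Fx i ik) lexy.
- move=> x y Fx Fy i ik; case: (Ff i ik) => _ _ Fmeet.
  exact: Fmeet (Fx i ik) (Fy i ik).
Qed.

(* An element outside an ultrafilter U is disjoint from some member of U:
   otherwise the filter generated by U and a would be a proper extension. *)
Lemma ultrafilter_disjoint U a :
  ultrafilter U -> ~ U a -> exists2 u, U u & u `&` a <= \bot.
Proof.
move=> [[Ufilter _] Umax] nUa; case: (Ufilter) => _ Uup Umeet.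
pose G y := exists2 u, U u & u `&` a <= y.
have Gfilter : lattice_filter G.
  split.
  - by exists \top; exists \top; [apply: filter_top | apply: lex1].
  - by move=> x y [u Uu le_ua] lexy; exists u => //; apply: le_trans lexy.
  - move=> x y [u Uu le_ux] [v Uv le_vy]; exists (u `&` v); first exact: Umeet.
    rewrite lexI; apply/andP; split.
    + by apply: le_trans le_ux; apply: leI2 (leIl _ _) (lexx _).
    + by apply: le_trans le_vy; apply: leI2 (leIr _ _) (lexx _).
have Ga : G a by exists \top; rewrite ?leIr //; apply: filter_top.
case: (classic (G \bot)) => // nGbot; exfalso; apply: nUa.
apply: (Umax G) Ga; first by split; last by exists \bot.
by move=> x Ux; exists x => //; apply: leIl.
Qed.

Lemma ultrafilter_prime U : ultrafilter U -> prime_filter U.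
Proof.
move=> Uultra; case: (Uultra) => -[Ufilter [z nUz]] _.
case: (Ufilter) => _ Uup Umeet.
have nUbot : ~ U \bot by move=> Ubot; apply: nUz; apply: Uup Ubot (le0x _).
split => // a b Uab.
case: (classic (U a)) => [|nUa]; first by left.
case: (classic (U b)) => [|nUb]; first by right.
have [u Uu le_ua] := ultrafilter_disjoint Uultra nUa.
have [v Uv le_vb] := ultrafilter_disjoint Uultra nUb.
exfalso; apply: nUbot; apply: Uup (Umeet _ _ (Umeet _ _ Uu Uv) Uab) _.
rewrite meetUr leUx; apply/andP; split.
- by apply: le_trans le_ua; apply: leI2 (leIl _ _) (lexx _).
- by apply: le_trans le_vb; apply: leI2 (leIr _ _) (lexx _).
Qed.

Lemma iter_lattice_automorphism (f : A -> A) (i : nat) :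
  lattice_automorphism f -> lattice_automorphism (iter i f).
Proof.
move=> [[g fK gK] fI fU f0]; split.
- by exists (iter i g); elim: i => [|i IH] x //; rewrite iterSr /= ?fK ?gK IH.
- by elim: i => [|i IH] x y //=; rewrite IH fI.
- by elim: i => [|i IH] x y //=; rewrite IH fU.
- by elim: i => [|i IH] //=; rewrite IH f0.
Qed.

Lemma image_prime (f : A -> A) P :
  lattice_automorphism f -> prime_filter P -> prime_filter (image_set f P).
Proof.
move=> [[g fK gK] fI fU f0] [[[x0 Px0] Pup Pmeet] nPbot Pprime].
have finj : injective f := can_inj fK.
have f_mono x y : f x <= f y -> x <= y.
  by rewrite !leEmeet -fI => /eqP/finj ->.
split.
- split.
  + by exists (f x0); exists x0.
  + move=> _ y [u Pu ->]; rewrite -[y]gK => /f_mono le_u.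
    by exists (g y) => //; apply: Pup Pu le_u.
  + by move=> _ _ [u Pu ->] [v Pv ->]; exists (u `&` v); rewrite ?fI //; apply: Pmeet.
- by move=> [u Pu]; rewrite -f0 => /finj bot_u; apply: nPbot; rewrite bot_u.
- move=> a b; rewrite -[a]gK -[b]gK -fU => -[u Pu /finj join_u].
  have [Pga | Pgb] : P (g a) \/ P (g b) by apply: Pprime; rewrite join_u.
  + by left; exists (g a).
  + by right; exists (g b).
Qed.

End LatticeFilters.

Section DeMorgan.
Context {disp : Order.disp_t} {A : tbDistrLatticeType disp}.
Variable neg : A -> A.
Hypothesis negK : forall x, neg (neg x) = x.
Hypothesis negU : forall x y, neg (x `|` y) = neg x `&` neg y.

Lemma negI x y : neg (x `&` y) = neg x `|` neg y.
Proof. by rewrite -[in LHS](negK x) -[in LHS](negK y) -negU negK. Qed.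

Lemma neg_anti x y : x <= y -> neg y <= neg x.
Proof. by move=> /join_r <-; rewrite negU leIl. Qed.

Lemma neg_top : neg \top = \bot.
Proof. by apply/eqP; rewrite eq_le le0x andbT -(negK \bot) neg_anti ?lex1. Qed.

Lemma br_transform_anti (S S' : A -> Prop) y :
  br_transform neg S' y -> (forall z, S z -> S' z) -> br_transform neg S y.
Proof. by move=> BS'y subSS' [x Sx yE]; apply: BS'y; exists x => //; apply: subSS'. Qed.

Lemma br_transformP (P : A -> Prop) y : br_transform neg P y <-> ~ P (neg y).
Proof.
split=> [nBy Pny | nPny [x Px yE]]; first by apply: nBy; exists (neg y); rewrite ?negK.
by apply: nPny; rewrite yE negK.
Qed.

Lemma br_filter (P : A -> Prop) :
  prime_filter P -> lattice_filter (br_transform neg P).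
Proof.
move=> [[_ Pup _] nPbot Pprime]; split.
- by exists \top; apply/br_transformP; rewrite neg_top.
- move=> x y /br_transformP nPnx lexy; apply/br_transformP => Pny.
  by apply: nPnx; apply: Pup Pny (neg_anti lexy).
- move=> x y /br_transformP nPnx /br_transformP nPny; apply/br_transformP.
  by rewrite negI => /Pprime [].
Qed.

Lemma br_transform_image (f : A -> A) (S : A -> Prop) y :
  injective f -> (forall x, f (neg x) = neg (f x)) ->
  br_transform neg S y -> br_transform neg (image_set f S) (f y).
Proof.
move=> finj fneg /br_transformP nSny; apply/br_transformP => -[x Sx].
by rewrite -fneg => /finj nyE; apply: nSny; rewrite nyE.
Qed.

Variable pc : A -> A.
Hypothesis mpM_axiom : forall x, x `|` neg x <= x `|` pc x.

Lemma delta_meet x : delta neg pc x = x `&` pc (neg x).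
Proof. by rewrite /delta /nabla !negK. Qed.

(* For a prime filter P, the set P \cap phi(P) is closed under Delta:
   x \/ ~x is in P, hence (mpM axiom at ~x) so is ~x \/ (~x)^*, and as
   ~x is not in P, (~x)^* is in P; dually ~(~x)^* is not in P. *)
Lemma prime_delta_closed (P : A -> Prop) x :
  prime_filter P -> P x -> br_transform neg P x ->
  P (delta neg pc x) /\ br_transform neg P (delta neg pc x).
Proof.
move=> [[_ Pup Pmeet] _ Pprime] Px /br_transformP nPnx.
have axiom_nx : neg x `|` x <= neg x `|` pc (neg x) by rewrite -{2}(negK x).
have Ppc : P (pc (neg x)).
  have : P (neg x `|` pc (neg x)) by apply: Pup Px (le_trans (leUr _ _) axiom_nx).
  by case/Pprime.
have x_below : x `&` neg (pc (neg x)) <= neg x.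
  have := neg_anti axiom_nx; rewrite !negU negK => le_nx.
  by apply: le_trans le_nx _; apply: leIr.
rewrite delta_meet; split; first exact: Pmeet.
apply/br_transformP; rewrite negI => /Pprime [//|Pnpc].
by apply: nPnx; apply: Pup (Pmeet _ _ Px Pnpc) x_below.
Qed.

End DeMorgan.

Lemma iter_cycle_pred (T : Type) (t : T -> T) (k i : nat) :
  (1 <= k)%N -> (forall x, iter k t x = x) -> (i < k)%N ->
  exists2 j, (j < k)%N & forall x, iter i t x = t (iter j t x).
Proof.
move=> k_gt0 tk; case: i => [|j] ik; last by exists j => //; apply: ltnW.
by exists k.-1; rewrite ?prednK // => x; rewrite -{1}(tk x) -(prednK k_gt0).
Qed.

Theorem proposition2p4 (disp : Order.disp_t) (A : tbDistrLatticeType disp)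
  (neg pc t : A -> A) (k : nat) (U : A -> Prop) :
  (1 <= k)%N ->
  Ck_algebra k neg pc t ->
  ultrafilter U ->
  c_filter neg pc t (N_set k neg t U).
Proof.
move=> k_gt0 [[[negK negU] _ axiom] [tbij [tI [tU [t0 [_ [tneg _]]]]]] tk] Uultra.
have tinj : injective t by apply: bij_inj.
have t_auto : lattice_automorphism t by split.
have Pprime i : prime_filter (image_set (iter i t) U).
  exact/image_prime/ultrafilter_prime/Uultra/iter_lattice_automorphism.
split.
- apply: filter_bigcap => i _; apply: filterI; first by case: (Pprime i).
  exact: (br_filter negK negU (Pprime i)).
- move=> x Nx i ik; case: (Nx i ik) => Px Bx.
  exact: (prime_delta_closed negK negU axiom (Pprime i) Px Bx).
- move=> x Nx i ik; have [j jk iE] := iter_cycle_pred k_gt0 tk ik.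
  have [[u Uu xE] Bx] := Nx j jk; split; first by exists u; rewrite // iE xE.
  apply: (br_transform_anti (br_transform_image negK tinj tneg Bx)) => _ [v Uv ->].
  by exists (iter j t v); [exists v | rewrite iE].
Qed.
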